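(* Let $k\ge0$, let $A,B$ be finite alphabets and $f:B^*\to A^*$ a monoid homomorphism. For $w_1,w_2\in B^*$, if $w_1\equiv_k w_2$ then $f(w_1)\equiv_k f(w_2)$.
   Context: For words $u_1,u_2$ over an alphabet, $u_1\equiv_k u_2$ means that $u_1$ and $u_2$ satisfy exactly the same sentences of $FO^2[<,\mathrm{Inv}]$ of quantifier depth at most $k$ (over that alphabet). $FO^2[<,\mathrm{Inv}]$ is two-variable first-order logic with $<$, unary letter predicates $a(x)$, and binary predicates $a(x,y)$ meaning that $a$ occurs at some position strictly between $x$ and $y$. *)

From mathcomp Require Import all_boot.
Set Implicit Arguments. Unset Strict Implicit. Unset Printing Implicit Defensive.

Inductive var := VX | VY.

Definition var_eqb (u v : var) : bool :=
  match u, v with VX, VX | VY, VY => true | _, _ => false end.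

Inductive form (A : Type) : Type :=
| FTrue  : form A
| FLet   : A -> var -> form A
| FEq    : var -> var -> form A
| FLt    : var -> var -> form A
| FInv   : A -> var -> var -> form A          (* a(x,y): a occurs strictly between x and y *)
| FNot   : form A -> form A
| FAnd   : form A -> form A -> form A
| FOr    : form A -> form A -> form A
| FEx    : var -> form A -> form A
| FAll   : var -> form A -> form A.

Section Semantics.
Variable A : eqType.

Fixpoint qdepth (phi : form A) : nat :=
  match phi with
  | FNot p => qdepth p
  | FAnd p q | FOr p q => maxn (qdepth p) (qdepth q)
  | FEx _ p | FAll _ p => (qdepth p).+1
  | _ => 0
  end.

Fixpoint free (v : var) (phi : form A) : bool :=
  match phi with
  | FTrue => false
  | FLet _ x => var_eqb v x
  | FEq x y | FLt x y | FInv _ x y => var_eqb v x || var_eqb v y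
  | FNot p => free v p
  | FAnd p q | FOr p q => free v p || free v q
  | FEx x p | FAll x p => ~~ var_eqb v x && free v p
  end.

Definition sentence (phi : form A) : Prop := ~~ free VX phi /\ ~~ free VY phi.

Definition update (nu : var -> nat) (v : var) (i : nat) : var -> nat :=
  fun u => if var_eqb u v then i else nu u.

Fixpoint eval (w : seq A) (nu : var -> nat) (phi : form A) : Prop :=
  match phi with
  | FTrue => True
  | FLet a x => onth w (nu x) = Some a
  | FEq x y => nu x = nu y
  | FLt x y => nu x < nu y
  | FInv a x y => exists z, nu x < z < nu y /\ onth w z = Some a
  | FNot p => ~ eval w nu p
  | FAnd p q => eval w nu p /\ eval w nu q
  | FOr p q => eval w nu p \/ eval w nu q
  | FEx x p => exists i, i < size w /\ eval w (update nu x i) p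
  | FAll x p => forall i, i < size w -> eval w (update nu x i) p
  end.

(* Truth of a sentence (the assignment is irrelevant for sentences). *)
Definition sat (w : seq A) (phi : form A) : Prop := eval w (fun _ => 0) phi.

Definition fo2inv_equiv (k : nat) (u1 u2 : seq A) : Prop :=
  forall phi : form A, sentence phi -> qdepth phi <= k -> (sat u1 phi <-> sat u2 phi).

End Semantics.

Definition monoid_hom (B A : Type) (f : seq B -> seq A) : Prop :=
  f [::] = [::] /\ forall u v, f (u ++ v) = f u ++ f v.

From mathcomp Require Import all_boot zify.
Set Implicit Arguments. Unset Strict Implicit. Unset Printing Implicit Defensive.

(* A monoid homomorphism f is determined by the words g b := f [:: b], and f w
   is the concatenation of the blocks g (w_j).  A position of f w is a pair
   (j, o) of a position j of w and an offset o inside its block, and positions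
   are ordered lexicographically.  As B is finite the offsets are bounded, so an
   FO^2[<,Inv] formula about f w translates into a formula about w in which the
   offsets of the two variables are finite data: letters, order and infix
   letters of f w are expressed through those of w.  The translation neither
   increases quantifier depth nor creates free variables, hence w1 ==_k w2
   transfers to f w1 ==_k f w2. *)

Lemma onth_lt (T : Type) (s : seq T) j x : onth s j = Some x -> j < size s.
Proof. by move=> h; rewrite -onthTE h. Qed.

Lemma var_eqbb v : var_eqb v v.
Proof. by case: v. Qed.

Lemma update_eq (nu : var -> nat) x i : update nu x i x = i.
Proof. by rewrite /update var_eqbb. Qed.

Section Blocks.
Variables (A B : Type) (g : B -> seq A).

Definition expand (w : seq B) : seq A := flatten (map g w).

Definition offset (w : seq B) (j : nat) : nat := size (expand (take j w)).

Definition in_block (w : seq B) (j o : nat) : bool :=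
  if onth w j is Some b then o < size (g b) else false.

Definition lexlt (j1 o1 j2 o2 : nat) : bool := (j1 < j2) || (j1 == j2) && (o1 < o2).

Lemma expand_cons b w : expand (b :: w) = g b ++ expand w.
Proof. by []. Qed.

Lemma offset0 w : offset w 0 = 0.
Proof. by rewrite /offset take0. Qed.

Lemma offsetS b w j : offset (b :: w) j.+1 = size (g b) + offset w j.
Proof. by rewrite /offset /= expand_cons size_cat. Qed.

Lemma in_blockP w j o :
  reflect (exists2 b, onth w j = Some b & o < size (g b)) (in_block w j o).
Proof.
rewrite /in_block; case: onth => [b|]; last by constructor; case.
by apply: (iffP idP) => [ho|[b' [eb] ho]]; [exists b|rewrite eb].
Qed.

Lemma in_block_lt w j o : in_block w j o -> j < size w.
Proof. by case/in_blockP => b hb _; apply: onth_lt hb. Qed.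

Lemma onth_expand w j o b : onth w j = Some b -> o < size (g b) ->
  onth (expand w) (offset w j + o) = onth (g b) o.
Proof.
elim: w j => [|c w IH] [|j] //=.
- by move=> [<-] ho; rewrite offset0 expand_cons onth_cat ho.
- move=> hj ho; rewrite offsetS expand_cons onth_cat.
  have -> : (size (g c) + offset w j + o < size (g c)) = false by lia.
  have -> : size (g c) + offset w j + o - size (g c) = offset w j + o by lia.
  exact: IH.
Qed.

Lemma expand_index w i : i < size (expand w) ->
  exists j o, in_block w j o /\ i = offset w j + o.
Proof.
elim: w i => [|c w IH] i //; rewrite expand_cons size_cat => hi.
case: (ltnP i (size (g c))) => hc.
  by exists 0, i; rewrite offset0.
have [j [o [hjo e]]] : exists j o, in_block w j o /\ i - size (g c) = offset w j + o.
  by apply: IH; lia.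
by exists j.+1, o; rewrite offsetS; split=> //; lia.
Qed.

Lemma offset_lt w j1 o1 j2 : in_block w j1 o1 -> j1 < j2 ->
  offset w j1 + o1 < offset w j2.
Proof.
elim: w j1 j2 => [|c w IH] [|j1] [|j2] //.
- by rewrite /in_block /= offset0 offsetS => ho _; lia.
- by move=> hjo hlt; rewrite !offsetS; have := IH _ _ hjo hlt; lia.
Qed.

Lemma offset_lt_size w j o : in_block w j o -> offset w j + o < size (expand w).
Proof.
by move=> hjo; have := offset_lt hjo (in_block_lt hjo); rewrite /offset take_size.
Qed.

Lemma ltn_offset w j1 o1 j2 o2 : in_block w j1 o1 -> in_block w j2 o2 ->
  (offset w j1 + o1 < offset w j2 + o2) = lexlt j1 o1 j2 o2.
Proof.
rewrite /lexlt => h1 h2; case: (ltngtP j1 j2) => [hj|hj|<-] /=.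
- by have := offset_lt h1 hj; lia.
- by have := offset_lt h2 hj; lia.
- by rewrite ltn_add2l.
Qed.

Lemma eq_offset w j1 o1 j2 o2 : in_block w j1 o1 -> in_block w j2 o2 ->
  offset w j1 + o1 = offset w j2 + o2 <-> j1 = j2 /\ o1 = o2.
Proof.
move=> h1 h2; split=> [e|[-> ->]] //.
have := ltn_offset h1 h2; have := ltn_offset h2 h1; rewrite e ltnn /lexlt.
by case: (ltngtP j1 j2) => //= <- /esym/negbT + /esym/negbT; lia.
Qed.

Lemma expand_exists w (P : nat -> Prop) :
  (exists i, i < size (expand w) /\ P i) <->
  exists j o, in_block w j o /\ P (offset w j + o).
Proof.
split=> [[i [/expand_index [j [o [hjo ->]]] hP]]|[j [o [hjo hP]]]].
- by exists j, o.
- by exists (offset w j + o); split=> //; apply: offset_lt_size.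
Qed.

Lemma expand_forall w (P : nat -> Prop) :
  (forall i, i < size (expand w) -> P i) <->
  forall j o, in_block w j o -> P (offset w j + o).
Proof.
split=> [hP j o hjo|hP i /expand_index [j [o [hjo ->]]]]; last exact: hP.
exact/hP/offset_lt_size.
Qed.

End Blocks.

Lemma monoid_hom_expand (A B : Type) (f : seq B -> seq A) :
  monoid_hom f -> forall w, f w = expand (fun b => f [:: b]) w.
Proof. by case=> f0 fcat; elim=> [|b w IH] //; rewrite -cat1s fcat IH. Qed.

Section Infixes.
Variables (A : eqType) (B : Type) (g : B -> seq A).

Definition occurs (a : A) (p : pred nat) (b : B) : bool :=
  has (fun o => p o && (onth (g b) o == Some a)) (iota 0 (size (g b))).

Lemma occursP a (p : pred nat) b :
  reflect (exists2 o, p o & onth (g b) o = Some a) (occurs a p b).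
Proof.
apply: (iffP hasP) => [[o _ /andP [? /eqP ?]]|[o po ho]]; first by exists o.
by exists o; rewrite ?po ?ho ?eqxx // mem_iota (onth_lt ho).
Qed.

Lemma expand_between w a j1 o1 j2 o2 : in_block g w j1 o1 -> in_block g w j2 o2 ->
  (exists z, offset g w j1 + o1 < z < offset g w j2 + o2 /\ onth (expand g w) z = Some a)
  <-> exists j o b, [/\ onth w j = Some b, onth (g b) o = Some a,
                       lexlt j1 o1 j o & lexlt j o j2 o2].
Proof.
move=> h1 h2; split.
- case=> z [/andP [lt1 lt2] hz]; have [j [o [hjo ez]]] := expand_index (onth_lt hz).
  case/in_blockP: (hjo) => b hb ho; rewrite ez (onth_expand hb ho) in hz.
  rewrite ez (ltn_offset h1 hjo) (ltn_offset hjo h2) in lt1 lt2.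
  by exists j, o, b.
- case=> j [o [b [hb hz lt1 lt2]]]; have ho := onth_lt hz.
  have hjo : in_block g w j o by apply/in_blockP; exists b.
  exists (offset g w j + o).
  by rewrite (ltn_offset h1 hjo) (ltn_offset hjo h2) lt1 lt2 (onth_expand hb ho).
Qed.

Lemma between_blocks w a j1 o1 j2 o2 :
  (exists j o b, [/\ onth w j = Some b, onth (g b) o = Some a,
                     lexlt j1 o1 j o & lexlt j o j2 o2]) <->
  (j1 < j2 /\
     (((exists2 b, onth w j1 = Some b & occurs a (fun o => o1 < o) b) \/
       (exists2 b, onth w j2 = Some b & occurs a (fun o => o < o2) b)) \/
      exists z b, [/\ j1 < z < j2, onth w z = Some b & occurs a predT b]))
  \/ (j1 = j2 /\ exists2 b, onth w j1 = Some b & occurs a (fun o => o1 < o < o2) b).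
Proof.
rewrite /lexlt; split.
- case=> j [o [b [hb hz]]].
  case/orP=> [lt1|/andP [/eqP e1 lt1]]; case/orP=> [lt2|/andP [/eqP e2 lt2]]; subst.
  + left; split; first exact: ltn_trans lt1 lt2.
    by right; exists j, b; split; rewrite ?lt1 //; apply/occursP; exists o.
  + by left; split=> //; left; right; exists b => //; apply/occursP; exists o.
  + by left; split=> //; left; left; exists b => //; apply/occursP; exists o.
  + by right; split=> //; exists b => //; apply/occursP; exists o; rewrite ?lt1.
- case=> [[lt [[[b hb /occursP [o ho hz]]|[b hb /occursP [o ho hz]]]|
               [z [b [/andP [lt1 lt2] hb /occursP [o _ hz]]]]]]|
          [<- [b hb /occursP [o /andP [lt1 lt2] hz]]]].
  + by exists j1, o, b; rewrite eqxx ho lt orbT.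
  + by exists j2, o, b; rewrite eqxx ho lt orbT.
  + by exists z, o, b; rewrite lt1 lt2.
  + by exists j1, o, b; rewrite eqxx lt1 lt2 !orbT.
Qed.

End Infixes.

Section Translation.
Variables (A : eqType) (B : finType) (g : B -> seq A).

Definition disjF (l : seq (form B)) : form B := foldr (@FOr B) (FNot (FTrue B)) l.
Definition conjF (l : seq (form B)) : form B := foldr (@FAnd B) (FTrue B) l.
Definition boolF (c : bool) : form B := if c then FTrue B else FNot (FTrue B).
Definition letterF (P : pred B) (v : var) : form B := disjF [seq FLet b v | b <- enum P].
Definition betweenF (P : pred B) (x y : var) : form B :=
  disjF [seq FInv b x y | b <- enum P].
Definition blockF (o : nat) (v : var) : form B := letterF (fun b => o < size (g b)) v.

Definition max_block : nat := \max_(b : B) size (g b).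

(* The variable [v] of the translated formula denotes a position j of w, and
   [off v] the offset of the position of f w it stands for inside the block of
   j; quantifiers over f w become quantifiers over j and a finite disjunction or
   conjunction over the offsets below [max_block]. *)
Fixpoint translate (phi : form A) (off : var -> nat) : form B :=
  match phi with
  | FTrue => FTrue B
  | FLet a x => letterF (fun b => onth (g b) (off x) == Some a) x
  | FEq x y => FAnd (FEq B x y) (boolF (off x == off y))
  | FLt x y => FOr (FLt B x y) (FAnd (FEq B x y) (boolF (off x < off y)))
  | FInv a x y =>
      FOr (FAnd (FLt B x y)
                (FOr (FOr (letterF (occurs g a (fun o => off x < o)) x)
                          (letterF (occurs g a (fun o => o < off y)) y))
                     (betweenF (occurs g a predT) x y)))
          (FAnd (FEq B x y) (letterF (occurs g a (fun o => off x < o < off y)) x))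
  | FNot p => FNot (translate p off)
  | FAnd p q => FAnd (translate p off) (translate q off)
  | FOr p q => FOr (translate p off) (translate q off)
  | FEx x p => FEx x (disjF [seq FAnd (blockF o x) (translate p (update off x o))
                           | o <- iota 0 max_block])
  | FAll x p => FAll x (conjF [seq FOr (FNot (blockF o x)) (translate p (update off x o))
                             | o <- iota 0 max_block])
  end.

Lemma eval_disjF (I : eqType) w nu (h : I -> form B) (s : seq I) :
  eval w nu (disjF (map h s)) <-> exists i, i \in s /\ eval w nu (h i).
Proof.
elim: s => [|i s IH] /=; first by split=> // -[i []].
split=> [[hi|/IH [j [js hj]]]|[j []]]; first by exists i; rewrite mem_head.
  by exists j; rewrite inE js orbT.
rewrite inE => /orP [/eqP -> hi|js hj]; first by left.
by right; apply/IH; exists j.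
Qed.

Lemma eval_conjF (I : eqType) w nu (h : I -> form B) (s : seq I) :
  eval w nu (conjF (map h s)) <-> forall i, i \in s -> eval w nu (h i).
Proof.
elim: s => [|i s IH] /=; first by split.
split=> [[hi /IH hs] j|hs]; first by rewrite inE => /orP [/eqP ->|/hs].
split; first by apply: hs; rewrite mem_head.
by apply/IH => j js; apply: hs; rewrite inE js orbT.
Qed.

Lemma eval_boolF w nu c : eval w nu (boolF c) <-> c.
Proof. by case: c => /=; split. Qed.

Lemma eval_letterF w nu P v :
  eval w nu (letterF P v) <-> exists2 b, onth w (nu v) = Some b & P b.
Proof.
rewrite eval_disjF; split=> [[b []]|[b hb Pb]]; first by rewrite mem_enum; exists b.
by exists b; rewrite mem_enum.
Qed.

Lemma eval_betweenF w nu P x y :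
  eval w nu (betweenF P x y) <->
  exists z b, [/\ nu x < z < nu y, onth w z = Some b & P b].
Proof.
rewrite eval_disjF; split=> [[b [Pb [z [hz hb]]]]|[z [b [hz hb Pb]]]].
  by exists z, b; rewrite mem_enum in Pb.
by exists b; rewrite mem_enum; split=> //; exists z.
Qed.

Lemma eval_blockF w nu o v : eval w nu (blockF o v) <-> in_block g w (nu v) o.
Proof. by rewrite eval_letterF; split=> /in_blockP. Qed.

Lemma in_block_max w j o : in_block g w j o -> o < max_block.
Proof.
by case/in_blockP => b _ ho; apply: leq_trans ho (leq_bigmax b).
Qed.

Definition translation_correct (w : seq B) (phi : form A) : Prop :=
  forall nu nu' off,
  (forall v, free v phi -> in_block g w (nu v) (off v)) ->
  (forall v, nu' v = offset g w (nu v) + off v) ->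
  eval (expand g w) nu' phi <-> eval w nu (translate phi off).

Lemma translation_update w p x nu nu' off j o :
  translation_correct w p ->
  (forall v, ~~ var_eqb v x -> free v p -> in_block g w (nu v) (off v)) ->
  (forall v, nu' v = offset g w (nu v) + off v) -> in_block g w j o ->
  eval (expand g w) (update nu' x (offset g w j + o)) p <->
  eval w (update nu x j) (translate p (update off x o)).
Proof.
move=> IH hfree hnu hjo; apply: IH => v; rewrite /update; by case: ifP => // /negbT; apply: hfree.
Qed.

Lemma translateP w phi : translation_correct w phi.
Proof.
elim: phi => [|a x|x y|x y|a x y|p IH|p IHp q IHq|p IHp q IHq|x p IH|x p IH]
  nu nu' off hfree hnu /=.
- by [].
- have /in_blockP [b hb ho] := hfree x (var_eqbb x).
  rewrite hnu (onth_expand hb ho) eval_letterF hb.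
  by split=> [hx|[_ [<-] /eqP //]]; exists b => //; apply/eqP.
- have [hx hy] : in_block g w (nu x) (off x) /\ in_block g w (nu y) (off y).
    by split; apply: hfree; rewrite /= var_eqbb ?orbT.
  rewrite !hnu (eq_offset hx hy) eval_boolF.
  by split=> [[-> ->]|[-> /eqP ->]].
- have [hx hy] : in_block g w (nu x) (off x) /\ in_block g w (nu y) (off y).
    by split; apply: hfree; rewrite /= var_eqbb ?orbT.
  rewrite !hnu (ltn_offset hx hy) eval_boolF /lexlt.
  split=> [/orP [lt|/andP [/eqP e lt]]|[lt|[e lt]]]; [by left|by right|by rewrite lt|].
  by rewrite e eqxx lt orbT.
- have [hx hy] : in_block g w (nu x) (off x) /\ in_block g w (nu y) (off y).
    by split; apply: hfree; rewrite /= var_eqbb ?orbT.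
  by rewrite !hnu (expand_between _ hx hy) between_blocks !eval_letterF eval_betweenF.
- exact: not_iff_compat (IH _ _ _ hfree hnu).
- rewrite (IHp nu nu' off) ?(IHq nu nu' off) // => v hv; apply: hfree.
  + by rewrite /= hv orbT.
  + by rewrite /= hv.
- rewrite (IHp nu nu' off) ?(IHq nu nu' off) // => v hv; apply: hfree.
  + by rewrite /= hv orbT.
  + by rewrite /= hv.
- have hfree' v : ~~ var_eqb v x -> free v p -> in_block g w (nu v) (off v).
    by move=> hv hp; apply: hfree; rewrite /= hv hp.
  have IHx := translation_update IH hfree' hnu.
  rewrite expand_exists; split=> [[j [o [hjo /(IHx _ _ hjo) hp]]]|].
  + exists j; split; first exact: in_block_lt hjo.
    apply/eval_disjF; exists o; split; first by rewrite mem_iota add0n (in_block_max hjo).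
    by split=> //; apply/eval_blockF; rewrite update_eq.
  + case=> j [_ /eval_disjF [o [_ [/eval_blockF hjo hp]]]]; rewrite update_eq in hjo.
    by exists j, o; split=> //; apply/(IHx _ _ hjo).
- have hfree' v : ~~ var_eqb v x -> free v p -> in_block g w (nu v) (off v).
    by move=> hv hp; apply: hfree; rewrite /= hv hp.
  have IHx := translation_update IH hfree' hnu.
  rewrite expand_forall; split=> [hall j _|hall j o hjo].
  + apply/eval_conjF => o _ /=.
    case hjo: (in_block g w j o); last by left => /eval_blockF; rewrite update_eq hjo.
    by right; apply/(IHx _ _ hjo)/hall.
  + have /eval_conjF /(_ o) := hall j (in_block_lt hjo).
    rewrite mem_iota add0n (in_block_max hjo) => /(_ isT) [|/(IHx _ _ hjo)] //.
    by case; apply/eval_blockF; rewrite update_eq.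
Qed.

Lemma qdepth_disjF (I : Type) (h : I -> form B) s d :
  (forall i, qdepth (h i) <= d) -> qdepth (disjF (map h s)) <= d.
Proof. by move=> hd; elim: s => //= i s IH; rewrite geq_max hd IH. Qed.

Lemma qdepth_conjF (I : Type) (h : I -> form B) s d :
  (forall i, qdepth (h i) <= d) -> qdepth (conjF (map h s)) <= d.
Proof. by move=> hd; elim: s => //= i s IH; rewrite geq_max hd IH. Qed.

Lemma qdepth_letterF P x : qdepth (letterF P x) = 0.
Proof. by apply/eqP; rewrite -leqn0; apply: qdepth_disjF. Qed.

Lemma qdepth_betweenF P x y : qdepth (betweenF P x y) = 0.
Proof. by apply/eqP; rewrite -leqn0; apply: qdepth_disjF. Qed.

Lemma qdepth_boolF c : qdepth (boolF c) = 0.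
Proof. by case: c. Qed.

Lemma qdepth_translate phi off : qdepth (translate phi off) <= qdepth phi.
Proof.
elim: phi off => [|a x|x y|x y|a x y|p IH|p IHp q IHq|p IHp q IHq|x p IH|x p IH] off /=;
  rewrite ?qdepth_letterF ?qdepth_betweenF ?qdepth_boolF //.
- by rewrite geq_max !leq_max IHp IHq orbT.
- by rewrite geq_max !leq_max IHp IHq orbT.
- by apply: qdepth_disjF => o /=; rewrite qdepth_letterF max0n IH.
- by apply: qdepth_conjF => o /=; rewrite qdepth_letterF max0n IH.
Qed.

Lemma free_disjF (I : Type) (h : I -> form B) s v :
  free v (disjF (map h s)) = has (fun i => free v (h i)) s.
Proof. by elim: s => //= i s ->. Qed.

Lemma free_conjF (I : Type) (h : I -> form B) s v :
  free v (conjF (map h s)) = has (fun i => free v (h i)) s.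
Proof. by elim: s => //= i s ->. Qed.

Lemma free_letterF P x v : free v (letterF P x) -> var_eqb v x.
Proof. by rewrite free_disjF => /hasP [b]. Qed.

Lemma free_betweenF P x y v : free v (betweenF P x y) -> var_eqb v x || var_eqb v y.
Proof. by rewrite free_disjF => /hasP [b]. Qed.

Lemma free_boolF c v : free v (boolF c) = false.
Proof. by case: c. Qed.

Lemma free_translate phi off v : free v (translate phi off) -> free v phi.
Proof.
elim: phi off => [|a x|x y|x y|a x y|p IH|p IHp q IHq|p IHp q IHq|x p IH|x p IH] off /=;
  rewrite ?free_boolF ?orbF.
- by [].
- exact: free_letterF.
- by [].
- by case/orP=> // /andP [].
- case/orP=> /orP [//|]; last by move/free_letterF=> ->.
  by case/orP=> [/orP [] /free_letterF ->|/free_betweenF]; rewrite ?orbT.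
- exact: IH.
- by case/orP=> [/IHp ->|/IHq ->]; rewrite ?orbT.
- by case/orP=> [/IHp ->|/IHq ->]; rewrite ?orbT.
- rewrite free_disjF => /andP [hx /hasP [o _ /orP [/free_letterF hv|/IH ->]]].
    by rewrite hv in hx.
  by rewrite hx.
- rewrite free_conjF => /andP [hx /hasP [o _ /orP [/free_letterF hv|/IH ->]]].
    by rewrite hv in hx.
  by rewrite hx.
Qed.

End Translation.

Theorem lemma13 (k : nat) (A B : finType) (f : seq B -> seq A)
  (hf : monoid_hom f) (w1 w2 : seq B) :
  fo2inv_equiv k w1 w2 -> fo2inv_equiv k (f w1) (f w2).
Proof.
move=> heq phi [hX hY] hd; pose g b := f [:: b].
have sat_image w : sat (f w) phi <-> sat w (translate g phi (fun=> 0)).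
  rewrite /sat (monoid_hom_expand hf); apply: translateP => [[]|v] /=.
  - by rewrite (negbTE hX).
  - by rewrite (negbTE hY).
  - by rewrite offset0.
rewrite !sat_image; apply: heq.
- by split; apply/negP => /free_translate; apply/negP.
- exact: leq_trans (qdepth_translate _ _ _) hd.
Qed.
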